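(* In every run of the algorithm described in the context in which at most $t$ processes crash, for all correct processes $p_i,p_j$: if $w\_sync_i[i]=x$ at some time, then there is a finite time after which $w\_sync_i[j]\ge x$.
   Context: Model. There are $n$ asynchronous processes $p_1,\dots,p_n$, of which up to $t<n/2$ may crash; a process runs its algorithm correctly until it crashes, and a process that never crashes is correct. Each ordered pair of processes is linked by a reliable (no loss, corruption, duplication or creation; every message sent to a correct process is eventually received), asynchronous, not necessarily FIFO channel. $p_w$ is the single writer, invoking writes sequentially; $v_0$ is the initial value. Messages: $\textsc{write}(b,v)$ with $b\in\{0,1\}$, which stands for the two types $\textsc{write0}(v)$ and $\textsc{write1}(v)$; $\textsc{read}()$; $\textsc{proceed}()$. Variables of $p_i$. These are: $history_i$ with $history_i[0]=v_0$; $w\_sync_i[1..n]$, initially all $0$; $r\_sync_i[1..n]$, initially all $0$. $\mathsf{write}(v)$ by $p_w$: $wsn\gets w\_sync_w[w]+1$; $w\_sync_w[w]\gets wsn$; $history_w[wsn]\gets v$. Send $\textsc{write}(wsn\bmod 2,v)$ to each $p_j$ with $w\_sync_w[j]=wsn-1$. Wait until at least $n-t$ indices $j$ have $w\_sync_w[j]=wsn$. Return. $\mathsf{read}()$ by $p_i$: $r\_sync_i[i]\gets r\_sync_i[i]+1$ and call the new value $rsn$. Send $\textsc{read}()$ to all $p_j$ with $j\ne i$. Wait until at least $n-t$ indices $j$ have $r\_sync_i[j]=rsn$. Let $sn\gets w\_sync_i[i]$. Wait until at least $n-t$ indices $j$ have $w\_sync_i[j]\ge sn$. Return $history_i[sn]$.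 On receipt of $\textsc{write}(b,v)$ from $p_j$ at $p_i$: Wait until $b=(w\_sync_i[j]+1)\bmod 2$. Let $wsn\gets w\_sync_i[j]+1$. If $wsn=w\_sync_i[i]+1$, then set $w\_sync_i[i]\gets wsn$ and $history_i[wsn]\gets v$, and send $\textsc{write}(wsn\bmod 2,v)$ to each $p_\ell$ with $w\_sync_i[\ell]=wsn-1$. Else, if $wsn<w\_sync_i[i]$, send $\textsc{write}((wsn+1)\bmod 2,history_i[wsn+1])$ to $p_j$. Finally set $w\_sync_i[j]\gets wsn$. On receipt of $\textsc{read}()$ from $p_j$ at $p_i$: Let $sn\gets w\_sync_i[i]$; wait until $w\_sync_i[j]\ge sn$; send $\textsc{proceed}()$ to $p_j$. On receipt of $\textsc{proceed}()$ from $p_j$ at $p_i$: $r\_sync_i[j]\gets r\_sync_i[j]+1$. Message handlers run concurrently; a waiting handler does not block the reception of other messages. *)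

From mathcomp Require Import all_boot.
From Stdlib Require List.
Set Implicit Arguments.
Unset Strict Implicit.
Unset Printing Implicit Defensive.

(* Messages: WRITE(b,v) (b = true stands for bit 1), READ(), PROCEED(). *)
Inductive Msg (V : Type) := MWrite of bool & V | MRead | MProceed.
Arguments MRead {V}.
Arguments MProceed {V}.

Inductive Client :=
| CIdle
| CWriting of nat      (* write with sequence number wsn, waiting for n-t acks *)
| CRead1 of nat        (* read with rsn, waiting for n-t proceed *)
| CRead2 of nat.       (* read that fixed sn, waiting for n-t w_sync >= sn *)

Section Model.
Variable n : nat.
Variable V : Type.

Record PState := MkP {
  hist    : nat -> V;
  wsync   : 'I_n -> nat;
  rsync   : 'I_n -> nat;
  crashed : bool;
  client  : Client;
  pendW   : seq ('I_n * bool * V);     (* waiting WRITE handlers (sender, b, v) *)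
  pendR   : seq ('I_n * nat);          (* waiting READ handlers (sender, sn) *)
  outbox  : seq ('I_n * Msg V)         (* messages decided but not yet sent *)
}.

(* Global state: processes and messages in transit (src, dst, msg). *)
Record GState := MkG {
  proc    : 'I_n -> PState;
  transit : seq ('I_n * 'I_n * Msg V)
}.

Definition fupd (A : Type) (f : 'I_n -> A) (i : 'I_n) (x : A) : 'I_n -> A :=
  fun k => if k == i then x else f k.

Definition hupd (h : nat -> V) (k : nat) (x : V) : nat -> V :=
  fun m => if m == k then x else h m.

Definition setP (g : GState) (i : 'I_n) (p : PState) : GState :=
  MkG (fupd (proc g) i p) (transit g).

Definition set_client (p : PState) (c : Client) : PState :=
  MkP (hist p) (wsync p) (rsync p) (crashed p) c (pendW p) (pendR p) (outbox p).

Definition set_outbox (p : PState) (o : seq ('I_n * Msg V)) : PState :=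
  MkP (hist p) (wsync p) (rsync p) (crashed p) (client p) (pendW p) (pendR p) o.

Definition set_pendW (p : PState) (l : seq ('I_n * bool * V)) : PState :=
  MkP (hist p) (wsync p) (rsync p) (crashed p) (client p) l (pendR p) (outbox p).

Definition set_pendR (p : PState) (l : seq ('I_n * nat)) : PState :=
  MkP (hist p) (wsync p) (rsync p) (crashed p) (client p) (pendW p) l (outbox p).

Definition do_crash (p : PState) : PState :=
  MkP (hist p) (wsync p) (rsync p) true (client p) (pendW p) (pendR p) (outbox p).

(* write(v) invoked by the writer i (first, atomic, part). *)
Definition do_invwrite (i : 'I_n) (v : V) (p : PState) : PState :=
  let wsn := (wsync p i).+1 in
  let ws := fupd (wsync p) i wsn in
  MkP (hupd (hist p) wsn v) ws (rsync p) (crashed p) (CWriting wsn)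
      (pendW p) (pendR p)
      (outbox p ++ [seq (j, MWrite (odd wsn) v) | j <- enum 'I_n & ws j == wsn.-1]).

(* read() invoked by p_i (first, atomic, part). *)
Definition do_invread (i : 'I_n) (p : PState) : PState :=
  let rsn := (rsync p i).+1 in
  MkP (hist p) (wsync p) (fupd (rsync p) i rsn) (crashed p) (CRead1 rsn)
      (pendW p) (pendR p)
      (outbox p ++ [seq (j, MRead) | j <- enum 'I_n & j != i]).

(* Reception at p_dst of message m from p_src: READ/WRITE start a handler
   (which possibly waits), PROCEED is processed immediately. *)
Definition deliver (dst src : 'I_n) (m : Msg V) (p : PState) : PState :=
  match m with
  | MWrite b v => set_pendW p (pendW p ++ [:: (src, b, v)])
  | MRead => set_pendR p (pendR p ++ [:: (src, wsync p dst)])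
  | MProceed =>
      MkP (hist p) (wsync p) (fupd (rsync p) src (rsync p src).+1) (crashed p)
          (client p) (pendW p) (pendR p) (outbox p)
  end.

(* Body (after the wait) of the WRITE(b,v) handler at p_i, message from p_j. *)
Definition exec_write (i j : 'I_n) (v : V) (p : PState) : PState :=
  let wsn := (wsync p j).+1 in
  if wsn == (wsync p i).+1 then
    let ws := fupd (wsync p) i wsn in
    MkP (hupd (hist p) wsn v) (fupd ws j wsn) (rsync p) (crashed p) (client p)
        (pendW p) (pendR p)
        (outbox p ++ [seq (l, MWrite (odd wsn) v) | l <- enum 'I_n & ws l == wsn.-1])
  else if wsn < wsync p i then
    MkP (hist p) (fupd (wsync p) j wsn) (rsync p) (crashed p) (client p)
        (pendW p) (pendR p)
        (outbox p ++ [:: (j, MWrite (odd wsn.+1) (hist p wsn.+1))])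
  else
    MkP (hist p) (fupd (wsync p) j wsn) (rsync p) (crashed p) (client p)
        (pendW p) (pendR p) (outbox p).

Inductive Act :=
| ACrash of 'I_n
| AInvWrite of V
| ACompWrite
| AInvRead of 'I_n
| AReadPh2 of 'I_n
| AReadRet of 'I_n
| ASend of 'I_n & 'I_n & Msg V        (* ASend i dst m *)
| ARecv of 'I_n & 'I_n & Msg V        (* ARecv src dst m *)
| AExecW of 'I_n & 'I_n & bool & V    (* AExecW i j b v : handler at i of WRITE(b,v) from j *)
| AExecR of 'I_n & 'I_n & nat         (* AExecR i j sn : handler at i of READ from j *)
| ASkip.

(* One step of the system; w is the writer, t the resilience bound. *)
Inductive step (t : nat) (w : 'I_n) (g : GState) : Act -> GState -> Prop :=
| st_crash i :
    ~~ crashed (proc g i) ->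
    step t w g (ACrash i) (setP g i (do_crash (proc g i)))
| st_invwrite v :
    ~~ crashed (proc g w) -> client (proc g w) = CIdle ->
    step t w g (AInvWrite v) (setP g w (do_invwrite w v (proc g w)))
| st_compwrite wsn :
    ~~ crashed (proc g w) -> client (proc g w) = CWriting wsn ->
    n - t <= #|[pred j | wsync (proc g w) j == wsn]| ->
    step t w g ACompWrite (setP g w (set_client (proc g w) CIdle))
| st_invread i :
    ~~ crashed (proc g i) -> client (proc g i) = CIdle ->
    step t w g (AInvRead i) (setP g i (do_invread i (proc g i)))
| st_readph2 i rsn :
    ~~ crashed (proc g i) -> client (proc g i) = CRead1 rsn ->
    n - t <= #|[pred j | rsync (proc g i) j == rsn]| ->
    step t w g (AReadPh2 i)
      (setP g i (set_client (proc g i) (CRead2 (wsync (proc g i) i))))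
| st_readret i sn :
    ~~ crashed (proc g i) -> client (proc g i) = CRead2 sn ->
    n - t <= #|[pred j | sn <= wsync (proc g i) j]| ->
    step t w g (AReadRet i) (setP g i (set_client (proc g i) CIdle))
| st_send i d m l1 l2 :
    ~~ crashed (proc g i) -> outbox (proc g i) = l1 ++ (d, m) :: l2 ->
    step t w g (ASend i d m)
      (MkG (fupd (proc g) i (set_outbox (proc g i) (l1 ++ l2)))
           (transit g ++ [:: (i, d, m)]))
| st_recv src dst m l1 l2 :
    ~~ crashed (proc g dst) -> transit g = l1 ++ (src, dst, m) :: l2 ->
    step t w g (ARecv src dst m)
      (MkG (fupd (proc g) dst (deliver dst src m (proc g dst))) (l1 ++ l2))
| st_execw i j b v l1 l2 :
    ~~ crashed (proc g i) -> pendW (proc g i) = l1 ++ (j, b, v) :: l2 ->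
    b = odd (wsync (proc g i) j).+1 ->
    step t w g (AExecW i j b v)
      (setP g i (exec_write i j v (set_pendW (proc g i) (l1 ++ l2))))
| st_execr i j sn l1 l2 :
    ~~ crashed (proc g i) -> pendR (proc g i) = l1 ++ (j, sn) :: l2 ->
    sn <= wsync (proc g i) j ->
    step t w g (AExecR i j sn)
      (setP g i (set_outbox (set_pendR (proc g i) (l1 ++ l2))
                            (outbox (proc g i) ++ [:: (j, MProceed)])))
| st_skip : step t w g ASkip g.

Definition init_state (v0 : V) : GState :=
  MkG (fun _ => MkP (fun _ => v0) (fun _ => 0) (fun _ => 0) false CIdle [::] [::] [::])
      [::].

Definition correct (s : nat -> GState) (i : 'I_n) : Prop :=
  forall k, crashed (proc (s k) i) = false.

Definition is_run (t : nat) (w : 'I_n) (v0 : V)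
    (s : nat -> GState) (a : nat -> Act) : Prop :=
  s 0 = init_state v0 /\ forall k, step t w (s k) (a k) (s k.+1).

Definition at_most_t_crash (t : nat) (s : nat -> GState) : Prop :=
  exists C : {set 'I_n}, #|C| <= t /\ forall i, i \notin C -> correct s i.

(* Fairness: reliable channels and weak fairness of correct processes. *)
Definition fair (t : nat) (w : 'I_n) (s : nat -> GState) (a : nat -> Act) : Prop :=
  (forall src dst m k, correct s dst -> List.In (src, dst, m) (transit (s k)) ->
     exists k', k <= k' /\ a k' = ARecv src dst m)
  /\ (forall i d m k, correct s i -> List.In (d, m) (outbox (proc (s k) i)) ->
     exists k', k <= k' /\ a k' = ASend i d m)
  /\ (forall i j b v k, correct s i ->
       (forall k', k <= k' -> List.In (j, b, v) (pendW (proc (s k') i)) /\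
                              b = odd (wsync (proc (s k') i) j).+1) ->
     exists k', k <= k' /\ a k' = AExecW i j b v)
  /\ (forall i j sn k, correct s i ->
       (forall k', k <= k' -> List.In (j, sn) (pendR (proc (s k') i)) /\
                              sn <= wsync (proc (s k') i) j) ->
     exists k', k <= k' /\ a k' = AExecR i j sn)
  /\ (forall wsn k, correct s w ->
       (forall k', k <= k' -> client (proc (s k') w) = CWriting wsn /\
                  n - t <= #|[pred j | wsync (proc (s k') w) j == wsn]|) ->
     exists k', k <= k' /\ a k' = ACompWrite)
  /\ (forall i rsn k, correct s i ->
       (forall k', k <= k' -> client (proc (s k') i) = CRead1 rsn /\
                  n - t <= #|[pred j | rsync (proc (s k') i) j == rsn]|) ->
     exists k', k <= k' /\ a k' = AReadPh2 i)
  /\ (forall i sn k, correct s i ->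
       (forall k', k <= k' -> client (proc (s k') i) = CRead2 sn /\
                  n - t <= #|[pred j | sn <= wsync (proc (s k') i) j]|) ->
     exists k', k <= k' /\ a k' = AReadRet i).

End Model.

From Pilot Require Import Defs.
From mathcomp Require Import all_boot zify.
From Stdlib Require Import Classical.
Set Implicit Arguments.
Unset Strict Implicit.
Unset Printing Implicit Defensive.

(* Between correct processes p and q, the WRITE messages from p to q behave like a
   pipe: those in flight carry exactly the sequence numbers after w_sync_q[p], up to
   the last one p has sent to q, namely w_sync_p[q] + 1 capped by w_sync_p[p] (p
   forwards a value to q as soon as it knows both the value and that q has the
   previous one). Reliable channels and fairness make q eventually process the first
   of them, so w_sync_q[p] keeps growing while it is below that bound.
   If w_sync_i[j] = d < w_sync_i[i] stayed constant forever, the pipe from i to j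
   would bring w_sync_j[i] up to d + 1, after which the pipe from j to i would carry
   the value d + 1 to i, raising w_sync_i[j] after all. Iterating gives the theorem. *)

Definition parity_count (lo hi : nat) (b : bool) : nat :=
  count (fun k => odd k == b) (iota lo.+1 (hi - lo)).

Lemma parity_countnn m b : parity_count m m b = 0.
Proof. by rewrite /parity_count subnn. Qed.

Lemma parity_countS m b : parity_count m m.+1 b = (odd m.+1 == b).
Proof. by rewrite /parity_count subSnn /= addn0. Qed.

Lemma parity_count_split lo mid hi b : lo <= mid <= hi ->
  parity_count lo hi b = parity_count lo mid b + parity_count mid hi b.
Proof.
case/andP=> lo_mid mid_hi; rewrite /parity_count -count_cat.
have -> : mid.+1 = lo.+1 + (mid - lo) by rewrite addSn subnKC.
rewrite -iotaD; congr (count _ (iota _ _)); lia.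
Qed.

Lemma parity_count_gt0 lo hi b : 0 < parity_count lo hi b -> lo < hi.
Proof. by rewrite /parity_count; case: (ltnP lo hi) => // /eqP->. Qed.

Lemma count_gt0_In (T : Type) (a : pred T) (s : seq T) :
  0 < count a s -> exists2 x, List.In x s & a x.
Proof.
elim: s => //= x s IHs; case ax: (a x) => /=; first by exists x; [left|].
by case/IHs=> y; exists y; [right|].
Qed.

Lemma count_enum_eq_and n (P : pred 'I_n) (q : 'I_n) :
  count (fun j => (j == q) && P j) (enum 'I_n) = P q.
Proof.
rewrite (eq_count (a2 := fun j => P q && (j == q))); last first.
  by move=> j; case: eqP => [->|]; rewrite ?andbT ?andbF.
case: (P q); last by rewrite count_pred0.
by rewrite (eq_count (a2 := pred1 q)) // count_uniq_mem ?enum_uniq ?mem_enum.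
Qed.

Lemma eventually_geq (f : nat -> nat) (B K : nat) :
  (forall k, K <= k -> f k < B -> exists2 k', k <= k' & f k < f k') ->
  exists2 k, K <= k & B <= f k.
Proof.
elim: B => [|B IHB] grows; first by exists K.
have [k K_k le_B] := IHB (fun k K_k lt_B => grows k K_k (ltnW lt_B)).
have [lt_B|le_fB] := ltnP B (f k); first by exists k.
have [k' k_k' lt_f] := grows k K_k le_fB.
by exists k'; [exact: leq_trans k_k' | lia].
Qed.

Section ChannelInvariant.
Variables (n : nat) (V : Type).
Implicit Types (g : GState n V) (P : PState n V) (p q : 'I_n) (b : bool).

Definition is_write b (m : Msg V) : bool :=
  if m is MWrite b' _ then b' == b else false.

Definition outbox_writes P q b : nat :=
  count (fun e : 'I_n * Msg V => (e.1 == q) && is_write b e.2) (outbox P).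

Definition transit_writes (T : seq ('I_n * 'I_n * Msg V)) p q b : nat :=
  count (fun e : 'I_n * 'I_n * Msg V =>
           [&& e.1.1 == p, e.1.2 == q & is_write b e.2]) T.

Definition pending_writes P p b : nat :=
  count (fun e : 'I_n * bool * V => (e.1.1 == p) && (e.1.2 == b)) (pendW P).

Definition in_flight g p q b : nat :=
  outbox_writes (proc g p) q b + transit_writes (transit g) p q b
  + pending_writes (proc g q) p b.

Definition delivered g p q : nat := wsync (proc g q) p.

Definition sent g p q : nat := minn (wsync (proc g p) p) (wsync (proc g p) q).+1.

(* A WRITE message carries only the parity of its sequence number, hence the
   counting by parity; "in flight" includes messages held by a waiting handler. *)
Definition channel_inv g p q : Prop :=
  [/\ wsync (proc g p) q <= wsync (proc g p) p, delivered g p q <= sent g p q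
    & forall b, in_flight g p q b = parity_count (delivered g p q) (sent g p q) b].

Definition channel_invs g : Prop := forall p q, channel_inv g p q.

Lemma count_write_broadcast (P0 : pred 'I_n) (c : bool) (v : V) q b :
  count (fun e : 'I_n * Msg V => (e.1 == q) && is_write b e.2)
        [seq (j, MWrite c v) | j <- enum 'I_n & P0 j] = P0 q && (c == b).
Proof.
rewrite count_map count_filter -(count_enum_eq_and (fun j => P0 j && (c == b))).
by apply: eq_count => j /=; case: (j == q); case: (P0 j); rewrite ?andbT ?andbF.
Qed.

Lemma channel_inv_selfE g p : channel_inv g p p <-> forall b, in_flight g p p b = 0.
Proof.
rewrite /channel_inv /delivered /sent.
have -> : minn (wsync (proc g p) p) (wsync (proc g p) p).+1 = wsync (proc g p) p by lia.
by split=> [[_ _ flight] b|none]; [rewrite flight|split=> // b]; rewrite parity_countnn ?none.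
Qed.

Lemma channel_inv_shift g g' p q :
  channel_inv g p q ->
  wsync (proc g' p) q <= wsync (proc g' p) p ->
  delivered g p q <= delivered g' p q <= sent g' p q ->
  sent g p q <= sent g' p q ->
  (forall b, in_flight g' p q b + parity_count (delivered g p q) (delivered g' p q) b
           = in_flight g p q b + parity_count (sent g p q) (sent g' p q) b) ->
  channel_inv g' p q.
Proof.
case=> _ del_sent flight own /andP[del' del'_sent'] sent' balance; split=> // b.
apply/(@addIn (parity_count (delivered g p q) (delivered g' p q) b)).
rewrite balance flight -parity_count_split ?del_sent //.
by rewrite addnC -parity_count_split ?del' ?(leq_trans del_sent).
Qed.

Lemma channel_inv_congr g g' p q :
  channel_inv g p q ->
  wsync (proc g' p) p = wsync (proc g p) p -> wsync (proc g' p) q = wsync (proc g p) q ->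
  delivered g' p q = delivered g p q ->
  (forall b, in_flight g' p q b = in_flight g p q b) -> channel_inv g' p q.
Proof.
move=> [own del_sent flight] same_p same_q same_del same_flight.
by rewrite /channel_inv /sent same_p same_q same_del; split=> // b; rewrite same_flight.
Qed.

Lemma channel_invs_congr g g' :
  channel_invs g -> (forall p, wsync (proc g' p) =1 wsync (proc g p)) ->
  (forall p q b, in_flight g' p q b = in_flight g p q b) -> channel_invs g'.
Proof.
move=> inv same_ws same_flight p q.
exact: channel_inv_congr (inv p q) (same_ws p p) (same_ws p q) (same_ws q p) (same_flight p q).
Qed.

(* [p] learns a new value and forwards it to [q] iff [q] was up to date. *)
Lemma channel_inv_learn g g' p q :
  channel_inv g p q ->
  delivered g' p q = delivered g p q ->
  wsync (proc g' p) p = (wsync (proc g p) p).+1 ->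
  wsync (proc g' p) q = wsync (proc g p) q ->
  (forall b, in_flight g' p q b = in_flight g p q b +
     (wsync (proc g p) q == wsync (proc g p) p) && (odd (wsync (proc g p) p).+1 == b)) ->
  channel_inv g' p q.
Proof.
move=> inv same_del learn same_q flight'; have [own _ _] := inv.
set c := wsync (proc g p) q in own flight' *; set A := wsync (proc g p) p in own flight' *.
have sent_A : c = A -> sent g p q = A by rewrite /sent -/c -/A => ->; lia.
have sent' : sent g' p q = if c == A then (sent g p q).+1 else sent g p q.
  by rewrite /sent learn same_q -/c -/A; case: eqVneq => [->|]; lia.
apply: (channel_inv_shift inv); rewrite ?same_del ?sent' //.
- by rewrite learn same_q; lia.
- by case: ifP => _; have [] := inv; lia.
- by case: ifP.
move=> b; rewrite parity_countnn addn0 flight'.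
case: eqVneq => [/sent_A ->|_]; last by rewrite parity_countnn.
by rewrite parity_countS.
Qed.

Lemma proc_setP g i P k : proc (Defs.setP g i P) k = if k == i then P else proc g k.
Proof. by []. Qed.

Lemma transit_setP g i P : transit (Defs.setP g i P) = transit g.
Proof. by []. Qed.

Lemma channel_inv_setP_other g i P p q :
  p != i -> q != i -> channel_inv g p q -> channel_inv (Defs.setP g i P) p q.
Proof.
move=> /negbTE p_i /negbTE q_i.
by rewrite /channel_inv /in_flight /delivered /sent !proc_setP p_i q_i.
Qed.

Lemma channel_invs_inert_update g i P :
  channel_invs g -> wsync P =1 wsync (proc g i) -> pendW P = pendW (proc g i) ->
  (forall q b, outbox_writes P q b = outbox_writes (proc g i) q b) ->
  channel_invs (Defs.setP g i P).
Proof.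
move=> inv same_ws same_pend same_out; apply: channel_invs_congr inv _ _ => [p|p q b].
  by rewrite proc_setP; case: (p =P i) => [->|].
rewrite /in_flight /pending_writes !proc_setP.
by case: (p =P i) => [->|_]; case: (q =P i) => [->|_]; rewrite ?same_out ?same_pend.
Qed.

Lemma channel_invs_send g i d m l1 l2 :
  channel_invs g -> outbox (proc g i) = l1 ++ (d, m) :: l2 ->
  channel_invs (MkG (fupd (proc g) i (set_outbox (proc g i) (l1 ++ l2)))
                    (transit g ++ [:: (i, d, m)])).
Proof.
move=> inv out_i; apply: channel_invs_congr inv _ _ => [p l|p q b] /=.
  by rewrite /fupd; case: (p =P i) => [->|].
rewrite /in_flight /outbox_writes /transit_writes /pending_writes /= /fupd count_cat /= addn0.
have -> : pendW (if q == i then set_outbox (proc g i) (l1 ++ l2) else proc g q)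
          = pendW (proc g q) by case: (q =P i) => [->|].
case: (p =P i) => [->|/eqP p_i]; first by rewrite eqxx out_i !count_cat /=; lia.
by rewrite [i == p]eq_sym (negbTE p_i) addn0.
Qed.

Lemma wsync_deliver dst src (m : Msg V) P :
  wsync (deliver dst src m P) = wsync P.
Proof. by case: m. Qed.

Lemma channel_invs_recv g src dst m l1 l2 :
  channel_invs g -> transit g = l1 ++ (src, dst, m) :: l2 ->
  channel_invs (MkG (fupd (proc g) dst (deliver dst src m (proc g dst))) (l1 ++ l2)).
Proof.
move=> inv tr; apply: channel_invs_congr inv _ _ => [p l|p q b] /=.
  by rewrite /fupd; case: (p =P dst) => [->|] //; rewrite wsync_deliver.
rewrite /in_flight /outbox_writes /transit_writes /pending_writes /= /fupd tr !count_cat /=.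
have -> : outbox (if p == dst then deliver dst src m (proc g dst) else proc g p)
          = outbox (proc g p) by case: (p =P dst) => [->|] //; case: m {tr}.
case: (q =P dst) => [->|/eqP q_dst].
  by rewrite eqxx; case: m {tr} => [c v| |] /=; rewrite ?count_cat /= ?andbF ?addn0; lia.
by rewrite [dst == q]eq_sym (negbTE q_dst) ?andbF ?addn0; lia.
Qed.

Lemma wsync_invwrite w (v : V) P l :
  wsync (do_invwrite w v P) l = if l == w then (wsync P w).+1 else wsync P l.
Proof. by []. Qed.

Lemma outbox_writes_invwrite w (v : V) P q b :
  outbox_writes (do_invwrite w v P) q b = outbox_writes P q b +
    [&& q != w, wsync P q == wsync P w & odd (wsync P w).+1 == b].
Proof.
rewrite /outbox_writes /= count_cat count_write_broadcast /fupd.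
by case: (q =P w) => [->|_] //=; rewrite eqn_leq ltnn.
Qed.

Lemma channel_invs_invwrite g w (v : V) :
  channel_invs g -> channel_invs (Defs.setP g w (do_invwrite w v (proc g w))).
Proof.
move=> inv p q.
case: (p =P w) => [->|/eqP/negbTE p_w]; case: (q =P w) => [->|/eqP/negbTE q_w].
- apply/channel_inv_selfE => b; have /channel_inv_selfE/(_ b) := inv w w.
  by rewrite /in_flight !proc_setP eqxx outbox_writes_invwrite eqxx /= addn0.
- apply: (channel_inv_learn (inv w q));
    rewrite /delivered ?proc_setP ?eqxx ?q_w ?wsync_invwrite ?eqxx ?q_w // => b.
  by rewrite /in_flight !proc_setP eqxx q_w outbox_writes_invwrite /=; lia.
- apply: (channel_inv_congr (inv p w));
    rewrite /delivered ?proc_setP ?eqxx ?p_w ?wsync_invwrite ?p_w // => b.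
  by rewrite /in_flight !proc_setP eqxx p_w.
- by apply: channel_inv_setP_other; rewrite ?p_w ?q_w.
Qed.

Lemma outbox_writes_set_pendW P l q b : outbox_writes (set_pendW P l) q b = outbox_writes P q b.
Proof. by []. Qed.

Lemma pendW_exec_write i j (v : V) P : pendW (exec_write i j v P) = pendW P.
Proof. by rewrite /exec_write; case: ifP => _; last case: ifP. Qed.

Lemma wsync_exec_write i j (v : V) P l :
  wsync (exec_write i j v P) l =
  if l == j then (wsync P j).+1
  else if (l == i) && (wsync P j == wsync P i) then (wsync P i).+1 else wsync P l.
Proof.
rewrite /exec_write eqSS /fupd; case: eqVneq => [ji|_] /=; first by rewrite ji; case: (l == i).
by rewrite andbF; case: ifP.
Qed.

Lemma wsync_exec_write_mono i j (v : V) P l :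
  wsync P l <= wsync (exec_write i j v P) l.
Proof.
rewrite wsync_exec_write; case: (l =P j) => [->|_] //.
by case: ifP => // /andP[/eqP-> _].
Qed.

Lemma outbox_writes_exec_write i j (v : V) P q b :
  outbox_writes (exec_write i j v P) q b = outbox_writes P q b
  + [&& wsync P j == wsync P i, q != i, wsync P q == wsync P i & odd (wsync P i).+1 == b]
  + [&& q == j, (wsync P j).+1 < wsync P i & odd (wsync P j).+2 == b].
Proof.
rewrite /exec_write eqSS; case: eqVneq => [ji|ji] /=.
  rewrite /outbox_writes count_cat count_write_broadcast /fupd ji ltnNge leqnSn andbF addn0.
  by case: (q =P i) => [->|] //=; rewrite eqn_leq ltnn.
rewrite addn0; case: ifP => _; last by rewrite andbF addn0.
by rewrite /outbox_writes count_cat /= addn0 [j == q]eq_sym.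
Qed.

Section ExecWrite.
Variables (g : GState n V) (r sd : 'I_n) (b0 : bool) (v : V).
Variables l1 l2 : seq ('I_n * bool * V).
Hypothesis inv : channel_invs g.
Hypothesis pend_r : pendW (proc g r) = l1 ++ (sd, b0, v) :: l2.
Hypothesis parity_b0 : b0 = odd (wsync (proc g r) sd).+1.

Let P' := exec_write r sd v (set_pendW (proc g r) (l1 ++ l2)).
Let g' := Defs.setP g r P'.

Lemma pending_writes_consumed p b :
  pending_writes (proc g r) p b = pending_writes P' p b + (sd == p) && (b0 == b).
Proof. by rewrite /pending_writes pendW_exec_write pend_r !count_cat /=; lia. Qed.

Lemma exec_write_sender_neq : sd != r.
Proof.
apply/eqP=> sd_r; have /channel_inv_selfE/(_ b0) := inv r r.
by rewrite /in_flight pending_writes_consumed sd_r !eqxx; lia.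
Qed.

Lemma exec_write_delivered_lt_sent : delivered g sd r < sent g sd r.
Proof.
have [_ _ flight] := inv sd r; apply: (parity_count_gt0 (b := b0)).
by rewrite -flight /in_flight pending_writes_consumed !eqxx; lia.
Qed.

Lemma channel_inv_exec_write_into p : p != r -> channel_inv g' p r.
Proof.
move=> /negbTE p_r; have sd_r := negbTE exec_write_sender_neq.
have same_p : wsync (proc g' p) =1 wsync (proc g p) by move=> l; rewrite proc_setP p_r.
have same_sent : sent g' p r = sent g p r by rewrite /sent !same_p.
have [p_sd|/negbTE p_sd] := eqVneq p sd; last first.
  apply: (channel_inv_congr (inv p r)) => // [|b].
    by rewrite /delivered proc_setP eqxx wsync_exec_write p_sd p_r.
  by rewrite /in_flight !proc_setP eqxx p_r pending_writes_consumed eq_sym p_sd addn0.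
subst p; have del' : delivered g' sd r = (delivered g sd r).+1.
  by rewrite /delivered proc_setP eqxx wsync_exec_write eqxx.
apply: (channel_inv_shift (inv sd r)); rewrite ?same_sent ?del' ?leqnSn //=.
- by rewrite !same_p; case: (inv sd r).
- exact: exec_write_delivered_lt_sent.
move=> b; rewrite parity_countnn parity_countS -parity_b0 addn0.
by rewrite /in_flight transit_setP !proc_setP eqxx p_r pending_writes_consumed eqxx; lia.
Qed.

Lemma channel_inv_exec_write_from q : q != r -> channel_inv g' r q.
Proof.
move=> /negbTE q_r; have sd_r := negbTE exec_write_sender_neq.
have [own_sd _ _] := inv r sd.
set e := wsync (proc g r) sd in own_sd *; set A := wsync (proc g r) r in own_sd *.
have ws_r : wsync (proc g' r) r = if e == A then A.+1 else A.
  by rewrite proc_setP eqxx wsync_exec_write eqxx [r == sd]eq_sym sd_r.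
have ws_q : wsync (proc g' r) q = if q == sd then e.+1 else wsync (proc g r) q.
  by rewrite proc_setP eqxx wsync_exec_write q_r andFb.
have del : delivered g' r q = delivered g r q by rewrite /delivered proc_setP q_r.
have flight b : in_flight g' r q b = in_flight g r q b
    + [&& e == A, wsync (proc g r) q == A & odd A.+1 == b]
    + [&& q == sd, e.+1 < A & odd e.+2 == b].
  rewrite /in_flight transit_setP !proc_setP eqxx q_r outbox_writes_exec_write q_r /=.
  by rewrite -/e -/A outbox_writes_set_pendW; lia.
have [q_sd|/negbTE q_sd] := eqVneq q sd; last first.
  rewrite q_sd in ws_q flight; have [e_A|e_A] := eqVneq e A.
    apply: (channel_inv_learn (inv r q)) => // [|b]; first by rewrite ws_r e_A eqxx.
    by rewrite flight e_A eqxx /= addn0.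
  apply: (channel_inv_congr (inv r q)) => // [|b]; first by rewrite ws_r (negbTE e_A).
  by rewrite flight (negbTE e_A) /= !addn0.
subst q; rewrite eqxx in ws_q.
have sent' : sent g' r sd = if (e == A) || (e.+1 < A) then (sent g r sd).+1 else sent g r sd.
  rewrite /sent ws_r ws_q -/e -/A; case: eqVneq => [->|e_A] /=; first by rewrite !minnSS; lia.
  by case: ltnP; lia.
apply: (channel_inv_shift (inv r sd)); rewrite ?del ?parity_countnn //.
- by rewrite ws_q ws_r; case: eqVneq; lia.
- by rewrite sent'; case: ifP => _; have [] := inv r sd; lia.
- by rewrite sent'; case: ifP.
move=> b; rewrite parity_countnn addn0 flight sent' eqxx.
have [e_A|e_A] /= := eqVneq e A.
  have -> : sent g r sd = A by rewrite /sent -/A -/e e_A; lia.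
  by rewrite parity_countS e_A ltnNge leqnSn /= addn0.
have [lt_eA|le_Ae] /= := ltnP e.+1 A; last by rewrite parity_countnn !addn0.
have -> : sent g r sd = e.+1 by rewrite /sent -/A -/e; lia.
by rewrite parity_countS addn0.
Qed.

Lemma channel_invs_exec_write : channel_invs g'.
Proof.
have sd_r := exec_write_sender_neq.
move=> p q; case: (p =P r) => [->|/eqP p_r]; case: (q =P r) => [->|/eqP q_r].
- apply/channel_inv_selfE => b; have /channel_inv_selfE/(_ b) := inv r r.
  rewrite /in_flight transit_setP !proc_setP eqxx outbox_writes_exec_write.
  rewrite pending_writes_consumed eqxx [r == sd]eq_sym (negbTE sd_r).
  by rewrite outbox_writes_set_pendW /= andbF; lia.
- exact: channel_inv_exec_write_from.
- exact: channel_inv_exec_write_into.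
- exact: channel_inv_setP_other.
Qed.

End ExecWrite.

Lemma channel_invs_init (v0 : V) : channel_invs (init_state n v0).
Proof. by move=> p q; split=> // b; rewrite /delivered /sent /= parity_countnn. Qed.

Lemma channel_invs_step t w g act g' :
  channel_invs g -> step t w g act g' -> channel_invs g'.
Proof.
move=> inv; case=> [i _|v _ _|wsn _ _ _|i _ _|i rsn _ _ _|i sn _ _ _|i d m l1 l2 _ out|
  src dst m l1 l2 _ tr|i j b v l1 l2 _ pend parity|i j sn l1 l2 _ _ _|] //;
  try exact: channel_invs_inert_update.
- exact: channel_invs_invwrite.
- apply: channel_invs_inert_update => // q b.
  rewrite /outbox_writes /= count_cat count_map.
  by rewrite [X in _ + X](@eq_count _ _ pred0) ?count_pred0 ?addn0 // => j /=; rewrite andbF.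
- exact: channel_invs_send out.
- exact: channel_invs_recv tr.
- exact: channel_invs_exec_write pend parity.
- apply: channel_invs_inert_update => // q b.
  by rewrite /outbox_writes /= count_cat /= andbF; lia.
Qed.

End ChannelInvariant.

Section StepFacts.
Variables (n t : nat) (w : 'I_n) (V : Type).
Implicit Types (g : GState n V) (act : Act n V).

Lemma wsync_step_mono g act g' q p :
  step t w g act g' -> wsync (proc g q) p <= wsync (proc g' q) p.
Proof.
have upd_mono i P : (forall l, wsync (proc g i) l <= wsync P l) ->
    wsync (proc g q) p <= wsync (fupd (proc g) i P q) p.
  by move=> mono; rewrite /fupd; case: (q =P i) => [->|].
case=> //= [i|v|wsn|i|i rsn|i sn|i d m l1 l2|src dst m l1 l2|i j b v l1 l2|i j sn l1 l2] *;
  apply: upd_mono => l //=.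
- by rewrite /fupd; case: (l =P w) => [->|].
- by rewrite wsync_deliver.
- exact: wsync_exec_write_mono.
Qed.

Lemma pendW_step_stay g act g' q x :
  step t w g act g' -> List.In x (pendW (proc g q)) ->
  wsync (proc g' q) x.1.1 = wsync (proc g q) x.1.1 -> List.In x (pendW (proc g' q)).
Proof.
move=> st x_in; case: st => /= [i _|v _ _|wsn _ _ _|i _ _|i rsn _ _ _|i sn _ _ _|
  i d m l1 l2 _ _|src dst m l1 l2 _ _|i j b v l1 l2 _ pend _|i j sn l1 l2 _ _ _|];
  rewrite ?proc_setP /fupd //; case: ifP => [/eqP q_i|] //; subst q => //.
- by case: m => //= *; rewrite List.in_app_iff; left.
rewrite pendW_exec_write wsync_exec_write /=; case: (x.1.1 =P j) => [->|x_j _]; first by lia.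
by move: x_in; rewrite pend !List.in_app_iff /= => -[|[x_eq|]]; auto; rewrite -x_eq in x_j.
Qed.

Lemma wsync_step_execw g i j b (v : V) g' :
  step t w g (AExecW i j b v) g' -> wsync (proc g' i) j = (wsync (proc g i) j).+1.
Proof. by move=> st; inversion st; rewrite proc_setP eqxx wsync_exec_write eqxx. Qed.

Lemma transit_step_send g i d m g' :
  step t w g (ASend i d m) g' -> List.In (i, d, m) (transit g').
Proof. by move=> st; inversion st; rewrite /= List.in_app_iff; right; left. Qed.

Lemma pendW_step_recv g src dst b (v : V) g' :
  step t w g (ARecv src dst (MWrite b v)) g' -> List.In (src, b, v) (pendW (proc g' dst)).
Proof. by move=> st; inversion st; rewrite /= /fupd eqxx /= List.in_app_iff; right; left. Qed.

End StepFacts.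

Section Run.
Variables (n t : nat) (w : 'I_n) (V : Type) (v0 : V).
Variables (s : nat -> GState n V) (a : nat -> Act n V).
Hypotheses (run : is_run t w v0 s a) (fair_run : fair t w s a).

Lemma channel_invs_run k : channel_invs (s k).
Proof.
case: run => init steps; elim: k => [|k IHk]; first by rewrite init; apply: channel_invs_init.
exact: channel_invs_step IHk (steps k).
Qed.

Lemma wsync_run_mono q p k k' :
  k <= k' -> wsync (proc (s k) q) p <= wsync (proc (s k') q) p.
Proof.
move=> /subnKC <-; elim: (k' - k) => [|m IHm]; first by rewrite addn0.
by rewrite addnS (leq_trans IHm) // (wsync_step_mono _ _ (run.2 _)).
Qed.

Lemma wsync_run_stuck q p K :
  ~ (exists2 K', K <= K' & wsync (proc (s K) q) p < wsync (proc (s K') q) p) ->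
  forall k, K <= k -> wsync (proc (s k) q) p = wsync (proc (s K) q) p.
Proof.
move=> stuck k K_k; apply/eqP; rewrite eqn_leq (wsync_run_mono q p K_k) andbT leqNgt.
by apply/negP => lt_k; apply: stuck; exists k.
Qed.

Lemma pending_write_progress p q K K1 (v : V) : correct s q -> K <= K1 ->
  List.In (p, odd (wsync (proc (s K) q) p).+1, v) (pendW (proc (s K1) q)) ->
  exists2 K', K <= K' & wsync (proc (s K) q) p < wsync (proc (s K') q) p.
Proof.
move=> cq K_K1; set d := wsync (proc (s K) q) p => pending.
apply: NNPP => /wsync_run_stuck stays.
have still m : List.In (p, odd d.+1, v) (pendW (proc (s (K1 + m)) q)).
  elim: m => [|m IHm]; first by rewrite addn0.
  by rewrite addnS; apply: (pendW_step_stay (run.2 _) IHm); rewrite /= !stays //; lia.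
have [_ [_ [execw_fair _]]] := fair_run.
have [k' K1_k'|k [K1_k act_k]] := execw_fair q p (odd d.+1) v K1 cq.
  rewrite -(subnKC K1_k'); split; first exact: still.
  by rewrite stays //; lia.
have st_k := run.2 k; rewrite act_k in st_k.
by have := wsync_step_execw st_k; rewrite !stays //; lia.
Qed.

Lemma outbox_msg_transit p q m k : correct s p ->
  List.In (q, m) (outbox (proc (s k) p)) ->
  exists2 k', k <= k' & List.In (p, q, m) (transit (s k')).
Proof.
move=> cp out; have [_ [send_fair _]] := fair_run.
have [k' [k_k' act_k']] := send_fair p q m k cp out.
have st := run.2 k'; rewrite act_k' in st.
by exists k'.+1; [exact: leqW | exact: transit_step_send st].
Qed.

Lemma transit_write_pending p q b (v : V) k : correct s q ->
  List.In (p, q, MWrite b v) (transit (s k)) ->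
  exists2 k', k <= k' & List.In (p, b, v) (pendW (proc (s k') q)).
Proof.
move=> cq tr; have [recv_fair _] := fair_run.
have [k' [k_k' act_k']] := recv_fair p q (MWrite b v) k cq tr.
have st := run.2 k'; rewrite act_k' in st.
by exists k'.+1; [exact: leqW | exact: pendW_step_recv st].
Qed.

Lemma delivered_progress p q K : correct s p -> correct s q ->
  delivered (s K) p q < sent (s K) p q ->
  exists2 K', K <= K' & delivered (s K) p q < delivered (s K') p q.
Proof.
rewrite /delivered => cp cq; set d := wsync (proc (s K) q) p => d_lt.
have [_ _ flight] := channel_invs_run K p q.
have : 0 < in_flight (s K) p q (odd d.+1).
  by rewrite flight (@parity_count_split _ d.+1) ?leqnSn // parity_countS eqxx.
have progress K1 v : K <= K1 -> List.In (p, odd d.+1, v) (pendW (proc (s K1) q)) ->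
    exists2 K', K <= K' & d < wsync (proc (s K') q) p.
  by move=> K_K1; apply: pending_write_progress.
rewrite /in_flight => pos.
have [out|[tr|pend]] : 0 < outbox_writes (proc (s K) p) q (odd d.+1)
    \/ 0 < transit_writes (transit (s K)) p q (odd d.+1)
    \/ 0 < pending_writes (proc (s K) q) p (odd d.+1) by lia.
- case/count_gt0_In: out => -[q' [b v| |]] x_in /=; rewrite ?andbF //.
  case/andP=> /eqP eq_q /eqP eq_b; subst q' b.
  have [K1 K_K1 tr] := outbox_msg_transit cp x_in.
  have [K2 K1_K2 pend] := transit_write_pending cq tr.
  exact: progress (leq_trans K_K1 K1_K2) pend.
- case/count_gt0_In: tr => -[[p' q'] [b v| |]] x_in /=; rewrite ?andbF //.
  case/and3P=> /eqP eq_p /eqP eq_q /eqP eq_b; subst p' q' b.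
  have [K1 K_K1 pend] := transit_write_pending cq x_in.
  exact: progress K_K1 pend.
- case/count_gt0_In: pend => -[[p' b] v] x_in /andP[/eqP /= eq_p /eqP /= eq_b].
  by subst p' b; exact: progress x_in.
Qed.

Lemma wsync_catch_up i j K : correct s i -> correct s j ->
  wsync (proc (s K) i) j < wsync (proc (s K) i) i ->
  exists2 K', K <= K' & wsync (proc (s K) i) j < wsync (proc (s K') i) j.
Proof.
move=> ci cj lagging; apply: NNPP => /wsync_run_stuck stays.
set d := wsync (proc (s K) i) j in lagging stays.
have [K1 K_K1 reached] : exists2 K1, K <= K1 & d.+1 <= delivered (s K1) i j.
  apply: eventually_geq => k K_k lt_d; apply: delivered_progress => //.
  rewrite /sent stays //; have := wsync_run_mono i i K_k; lia.
have [own _ _] := channel_invs_run K1 j i.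
have [|K2 K1_K2] := @delivered_progress j i K1 cj ci.
  by move: own reached; rewrite /delivered /sent stays //; lia.
by rewrite /delivered !stays // ?ltnn // (leq_trans K_K1).
Qed.

End Run.

Theorem lemma6 (n t : nat) (Hnt : t.*2 < n) (w : 'I_n) (V : Type) (v0 : V)
    (s : nat -> GState n V) (a : nat -> Act n V) :
  is_run t w v0 s a ->
  fair t w s a ->
  at_most_t_crash t s ->
  forall i j : 'I_n, correct s i -> correct s j ->
  forall (x k : nat), wsync (proc (s k) i) i = x ->
  exists k0, forall k', k0 <= k' -> x <= wsync (proc (s k') i) j.
Proof.
move=> run fair_run _ i j ci cj x k wsync_x.
have [K _ reached] : exists2 K, k <= K & x <= wsync (proc (s K) i) j.
  apply: eventually_geq => K k_K lt_x; apply: (wsync_catch_up run fair_run) => //.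
  by rewrite (leq_trans lt_x) // -wsync_x (wsync_run_mono run).
by exists K => k' K_k'; rewrite (leq_trans reached) // (wsync_run_mono run).
Qed.
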